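(* Let $x\in\{\text{stage},\text{stage2}\}$ (credulous mode, i.e. the semantics $\sigma_x$ itself). Then there exist argumentation frameworks $AF=(AR,Attacks)$ and $AF'=(AR',Attacks')$ with $AF\preceq_N AF'$ such that the following statement does NOT hold: $$\forall E\in\sigma_x(AF)\ \exists E'\in\sigma_x(AF') \text{ such that } (E'\not\subseteq AR\ \lor\ E'=E).$$
   Context: An argumentation framework is a pair $AF=(AR,Attacks)$ with $AR$ a finite set and $Attacks\subseteq AR\times AR$; $a$ attacks $b$ iff $(a,b)\in Attacks$; a set $S$ attacks $b$ iff some element of $S$ attacks $b$. An argumentation semantics $\sigma$ assigns to each $AF$ a set $\sigma(AF)$ of subsets of $AR$. $AF\preceq_N AF'$ (normal expansion) iff $AR\subseteq AR'$, $Attacks\subseteq Attacks'$ and no $(a,b)\in Attacks'\setminus Attacks$ has $a,b\in AR$. $S$ is conflict-free iff no element of $S$ attacks an element of $S$; $S^+=\{b:\text{some } a\in S\text{ attacks } b\}$. A stage extension is a conflict-free $S$ such that no conflict-free $S'$ has $S'\cup S'^+\supsetneq S\cup S^+$. Attack sequence: $\langle a_1,\dots,a_n\rangle$ of pairwise distinct arguments with $(a_i,a_{i+1})\in Attacks$; $b$ is reachable from $a$ iff such a sequence has $a_1=a,a_n=b$. SCCs: maximal sets of mutually reachable arguments; $SCCS_{AF}$ is the set of them. $AF\downarrow_S=(S,Attacks\cap(S\times S))$. For an SCC $S$ and $E\subseteq AR$: $S^-_{out}=\{a\notin S: a\text{ attacks some element of }S\}$; $D_{AF}(S,E)=\{a\in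 S: E\cap S^-_{out}\text{ attacks }a\}$; $P_{AF}(S,E)=\{a\in S: E\cap S^-_{out}\text{ does not attack }a\text{ and }\exists b\in S^-_{out}\text{ attacking }a\text{ such that }E\text{ does not attack }b\}$; $UP_{AF}(S,E)=S\setminus D_{AF}(S,E)$. Stage2: $E$ is a stage2 extension of $AF$ iff either $|SCCS_{AF}|=1$ and $E$ is a stage extension of $AF$, or $|SCCS_{AF}|>1$ and for every $S\in SCCS_{AF}$, $E\cap S$ is a stage2 extension of $AF\downarrow_{UP_{AF}(S,E)}$. $\sigma_x(AF)$ is the set of all $x$-extensions. *)

From mathcomp Require Import all_boot.
Set Implicit Arguments. Unset Strict Implicit. Unset Printing Implicit Defensive.

Record AF (T : finType) := mkAF { args : {set T}; att : {set T * T} }.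

Section AFDefs.
Variable T : finType.
Implicit Types (F G : AF T) (S E : {set T}) (a b : T).

Definition wf_AF F : Prop :=
  forall a b, (a, b) \in att F -> (a \in args F) && (b \in args F).

Definition attacks F a b : bool := (a, b) \in att F.
Definition set_attacks F S b : bool := [exists a in S, attacks F a b].

Definition normal_exp F G : Prop :=
  [/\ args F \subset args G, att F \subset att G &
      forall a b, (a, b) \in att G -> (a, b) \notin att F ->
        ~ ((a \in args F) && (b \in args F))].

Definition conflict_free F S : Prop :=
  forall a b, a \in S -> b \in S -> ~~ attacks F a b.

Definition range F S : {set T} := S :|: [set b | set_attacks F S b].

Definition stage F S : Prop :=
  S \subset args F /\ conflict_free F S /\
  ~ (exists S', S' \subset args F /\ conflict_free F S' /\ range F S \proper range F S').

Definition reachable F a b : Prop :=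
  exists s : seq T, [/\ a \in args F, all (fun x => x \in args F) s,
    path (attacks F) a s, uniq (a :: s) & last a s = b].

Definition mutually_reachable F S : Prop :=
  S \subset args F /\ forall a b, a \in S -> b \in S -> reachable F a b /\ reachable F b a.

Definition is_SCC F S : Prop :=
  mutually_reachable F S /\
  forall S', mutually_reachable F S' -> S \subset S' -> S' = S.

Definition restrict F S : AF T :=
  mkAF S [set p in att F | (p.1 \in S) && (p.2 \in S)].

Definition S_out F S : {set T} :=
  [set a in args F | (a \notin S) && [exists b in S, attacks F a b]].

Definition D_AF F S E : {set T} := [set a in S | set_attacks F (E :&: S_out F S) a].
Definition UP_AF F S E : {set T} := S :\: D_AF F S E.

Inductive stage2 : AF T -> {set T} -> Prop :=
| stage2_one F E :
    (exists S, is_SCC F S /\ forall S', is_SCC F S' -> S' = S) ->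
    stage F E -> stage2 F E
| stage2_many F E :
    (exists S1 S2, [/\ is_SCC F S1, is_SCC F S2 & S1 <> S2]) ->
    E \subset args F ->
    (forall S, is_SCC F S -> stage2 (restrict F (UP_AF F S E)) (E :&: S)) ->
    stage2 F E.

End AFDefs.

Inductive semantics := Sem_stage | Sem_stage2.

Definition sigma (x : semantics) (T : finType) (F : AF T) (E : {set T}) : Prop :=
  match x with Sem_stage => stage F E | Sem_stage2 => stage2 F E end.

(** With two mutually attacking arguments a0, a1, the set {a1} is a stage
    extension. Add a self-attacking argument a2 that attacks and is attacked by
    a0. Now {a0} is conflict-free with full range, so every stage extension has
    full range; it cannot contain a2, so it must attack a2 and hence contain a0.
    Thus no stage extension of the expansion is {a1}, and none contains the new
    argument. Both frameworks are strongly connected, so stage2 coincides with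
    stage on them. *)
From mathcomp Require Import all_boot.
Set Implicit Arguments. Unset Strict Implicit. Unset Printing Implicit Defensive.

Definition star_center (T : finType) (F : AF T) (h : T) : Prop :=
  h \in args F /\ forall a, a \in args F -> a != h -> attacks F a h && attacks F h a.

Section Stage.
Variables (T : finType) (F : AF T).
Implicit Types (S E : {set T}) (a h : T).

Lemma conflict_free_self_attack S a : conflict_free F S -> attacks F a a -> a \notin S.
Proof. by move=> cfS aa; apply/negP=> aS; move: (cfS a a aS aS); rewrite aa. Qed.

Lemma star_center_full_range h : star_center F h -> ~~ attacks F h h ->
  [/\ [set h] \subset args F, conflict_free F [set h] & args F \subset range F [set h]].
Proof.
move=> [hF star] hh; split.
- by apply/subsetP=> a; rewrite inE => /eqP->.
- by move=> a b; rewrite !inE => /eqP-> /eqP->.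
- apply/subsetP=> a aF; rewrite !inE; have [// | ah] := eqVneq a h.
  by apply/existsP; exists h; rewrite inE eqxx (andP (star a aF ah)).2.
Qed.

Hypothesis wfF : wf_AF F.

Lemma range_sub_args S : S \subset args F -> range F S \subset args F.
Proof.
move=> sSF; apply/subsetP=> x; rewrite !inE => /orP[xS|/existsP[y /andP[_ yx]]].
- exact: (subsetP sSF).
- by case/andP: (wfF yx).
Qed.

Lemma stage_full_rangeP S0 :
  S0 \subset args F -> conflict_free F S0 -> args F \subset range F S0 ->
  forall E, stage F E <-> [/\ E \subset args F, conflict_free F E & args F \subset range F E].
Proof.
move=> sS0F cfS0 fullS0 E; split.
- case=> sEF [cfE maxE]; split=> //.
  apply/negPn/negP=> notfullE; apply: maxE; exists S0; split=> //; split=> //.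
  rewrite properE (subset_trans (range_sub_args sEF) fullS0) /=.
  by apply: contra notfullE; apply: subset_trans.
- case=> sEF cfE fullE; split=> //; split=> // -[S [sSF [_ ltES]]].
  move: ltES; rewrite properE => /andP[_ /negP]; apply.
  exact: subset_trans (range_sub_args sSF) fullE.
Qed.

Lemma stage_star_center h : star_center F h -> ~~ attacks F h h -> stage F [set h].
Proof.
move=> hstar hh; have [sub cf full] := star_center_full_range hstar hh.
exact/(stage_full_rangeP sub cf full).
Qed.

End Stage.

Section SingleSCC.
Variables (T : finType) (F : AF T).
Implicit Types (E : {set T}) (a b h : T).

Lemma star_center_reachable h : star_center F h ->
  forall a b, a \in args F -> b \in args F -> reachable F a b.
Proof.
move=> [hF star] a b aF bF.
have [-> | ab] := eqVneq a b; first by exists [::].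
case: (eqVneq a h) aF ab => [-> _ hb | ah aF ab].
  exists [:: b]; rewrite /= hF bF inE hb (andP (star b bF _)).2 //.
  by rewrite eq_sym.
case: (eqVneq b h) bF ab => [-> _ _ | bh bF ab].
  by exists [:: h]; rewrite /= hF inE ah (andP (star a aF ah)).1.
exists [:: h; b]; rewrite /= hF bF (andP (star a aF ah)).1 (andP (star b bF bh)).2.
by rewrite !inE negb_or ah ab eq_sym bh.
Qed.

Lemma star_center_mutually_reachable h : star_center F h -> mutually_reachable F (args F).
Proof. by move=> hstar; split=> // a b aF bF; split; apply: (star_center_reachable hstar). Qed.

Lemma sigma_single_SCC x E :
  mutually_reachable F (args F) -> sigma x F E <-> stage F E.
Proof.
move=> mrF; have SCC_args : is_SCC F (args F).
  by split=> // S [sSF _] sFS; apply/eqP; rewrite eqEsubset sSF.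
have SCC_unique S : is_SCC F S -> S = args F.
  by case=> -[sSF _] maxS; symmetry; apply: maxS.
case: x => //=; split=> [|stE]; last by apply: stage2_one; first by exists (args F).
move=> st2E; case: st2E SCC_unique => // G E' [S1 [S2 [SCC1 SCC2 neq12]]] _ _ unique.
by case: neq12; rewrite (unique _ SCC1) (unique _ SCC2).
Qed.

End SingleSCC.

Definition a0 : 'I_3 := @Ordinal 3 0 isT.
Definition a1 : 'I_3 := @Ordinal 3 1 isT.
Definition a2 : 'I_3 := @Ordinal 3 2 isT.

Lemma ord3P (x : 'I_3) : [\/ x = a0, x = a1 | x = a2].
Proof.
by case: x => [[|[|[|//]]] ?]; [constructor 1 | constructor 2 | constructor 3];
  apply: val_inj.
Qed.

Definition F0 : AF 'I_3 := mkAF [set a0; a1] [set (a0, a1); (a1, a0)].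
Definition F1 : AF 'I_3 := mkAF [set a0; a1; a2]
  [set (a0, a1); (a1, a0); (a0, a2); (a2, a0); (a2, a2)].

Lemma wf_F0 : wf_AF F0.
Proof. by move=> a b; case: (ord3P a) => ->; case: (ord3P b) => ->; rewrite !inE. Qed.

Lemma wf_F1 : wf_AF F1.
Proof. by move=> a b; case: (ord3P a) => ->; case: (ord3P b) => ->; rewrite !inE. Qed.

Lemma normal_exp_F0_F1 : normal_exp F0 F1.
Proof.
split; first by apply/subsetP=> a; case: (ord3P a) => ->; rewrite !inE.
  by apply/subsetP=> -[a b]; case: (ord3P a) => ->; case: (ord3P b) => ->; rewrite !inE.
by move=> a b; case: (ord3P a) => ->; case: (ord3P b) => ->; rewrite !inE.
Qed.

Lemma star_center_F0_a1 : star_center F0 a1.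
Proof. by split=> [|a]; rewrite ?inE //; case: (ord3P a) => ->; rewrite /attacks !inE. Qed.

Lemma star_center_F1_a0 : star_center F1 a0.
Proof. by split=> [|a]; rewrite ?inE //; case: (ord3P a) => ->; rewrite /attacks !inE. Qed.

Lemma stage_F0_a1 : stage F0 [set a1].
Proof. by apply: (stage_star_center wf_F0 star_center_F0_a1); rewrite /attacks !inE. Qed.

Lemma stage_F1_a0_sub_args_F0 E : stage F1 E -> a0 \in E /\ E \subset args F0.
Proof.
have [|sub0 cf0 full0] := star_center_full_range star_center_F1_a0.
  by rewrite /attacks !inE.
case/(stage_full_rangeP wf_F1 sub0 cf0 full0) => sEF1 cfE /subsetP fullE.
have a2E : a2 \notin E by apply: conflict_free_self_attack cfE _; rewrite /attacks !inE.
split.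
- have /fullE : a2 \in args F1 by rewrite !inE.
  rewrite !inE (negbTE a2E) /= => /existsP [a /andP [aE]].
  by case: (ord3P a) aE => -> aE //; [rewrite /attacks !inE | rewrite aE in a2E].
- apply/subsetP=> a aE; move: (subsetP sEF1 a aE) a2E.
  by case: (ord3P a) aE => -> aE; rewrite !inE ?aE.
Qed.

Theorem proposition39 :
  forall x : semantics,
  exists (T : finType) (F F' : AF T),
    [/\ wf_AF F, wf_AF F', normal_exp F F' &
      ~ (forall E, sigma x F E ->
           exists E', sigma x F' E' /\ (~~ (E' \subset args F) \/ E' = E))].
Proof.
move=> x; exists 'I_3, F0, F1; split; [exact: wf_F0 | exact: wf_F1 | exact: normal_exp_F0_F1 |].
have mr0 := star_center_mutually_reachable star_center_F0_a1.
have mr1 := star_center_mutually_reachable star_center_F1_a0.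
case/(_ [set a1]); first exact/(sigma_single_SCC _ _ mr0)/stage_F0_a1.
move=> E' [/(sigma_single_SCC _ _ mr1)/stage_F1_a0_sub_args_F0 [a0E' sE'F0]].
by rewrite sE'F0 => -[// | E'a1]; move: a0E'; rewrite E'a1 inE.
Qed.
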